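(* Let $\mathbb{A}\colon\mathbb{R}^d\to\mathbb{R}^d$ be Lipschitz continuous and let $T>0$, $X_0\in\mathbb{R}^d$. Then there is a unique $(X,Z)\in\mathcal{C}^1([0,T),\mathbb{R}^{2d})$ with $X(0)=X_0$, $Z(0)=0$ satisfying, for all $t\in(0,T)$, \[ \dot X(t)=-Z(t)-\mathbb{A}(X(t)),\qquad \dot Z(t)=-\frac{1}{T-t}Z(t)-\frac{1}{T-t}\mathbb{A}(X(t)). \] *)

From HB Require Import structures.
From mathcomp Require Import all_boot all_order all_algebra.
From mathcomp Require Import all_classical all_reals all_analysis.
Set Implicit Arguments. Unset Strict Implicit. Unset Printing Implicit Defensive.
Import Order.TTheory GRing.Theory Num.Theory.
Import numFieldNormedType.Exports.
Local Open Scope classical_set_scope.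
Local Open Scope ring_scope.

(* Lipschitz continuity of a map R^d -> R^d (any norm; all are equivalent in
   finite dimension). *)
Definition lipschitz_map (R : realType) (d : nat) (A : 'rV[R]_d -> 'rV[R]_d) :=
  exists k : R, forall x y, `|A x - A y| <= k * `|x - y|.

(* f belongs to C^1([0,T), V): f is continuous on [0,T), differentiable on
   (0,T) with derivative continuous on (0,T) and having a (finite) limit at
   0+ (i.e. the derivative extends continuously to [0,T); equivalently f has a
   right derivative at 0 and f' is continuous on [0,T)). *)
Definition C1_on_0T (R : realType) (V : normedModType R) (T : R) (f : R -> V) :=
  [/\ {within `[0, T[, continuous f},
      (forall t, 0 < t < T -> derivable f t 1),
      {in `]0, T[, continuous (derive1 f)} &
      cvg ((derive1 f) t @[t --> 0^'+])].

Definition solves_system (R : realType) (d : nat) (A : 'rV[R]_d -> 'rV[R]_d)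
    (T : R) (X0 : 'rV[R]_d) (X Z : R -> 'rV[R]_d) :=
  [/\ C1_on_0T T X, C1_on_0T T Z, X 0 = X0, Z 0 = 0 &
      forall t, 0 < t < T ->
        derive1 X t = - Z t - A (X t) /\
        derive1 Z t = - ((T - t)^-1 *: Z t) - (T - t)^-1 *: A (X t)].

(* Writing Y = (X, Z) as one vector turns the system into Y' = F(t, Y), where
   F(t, .) is Lipschitz with constant L = (1 + 1/(T - b))(1 + |k|) for t in
   [0, b], for every b < T.  On [0, b] the Picard map halves the Bielecki
   distance sup_s |x s - y s| e^(-2Ls), so the Picard iterates converge to its
   unique continuous fixed point; fixed points and solutions of the ODE
   coincide.  The iterates do not depend on b, so neither does their limit: it
   is a solution on all of [0, T), and every solution on [0, T) agrees with it
   on each [0, b]. *)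

From HB Require Import structures.
From mathcomp Require Import all_boot all_order all_algebra.
From mathcomp Require Import all_classical all_reals all_analysis.
From mathcomp Require Import ring lra.
Import Order.TTheory GRing.Theory Num.Theory.
Import numFieldNormedType.Exports.
Local Open Scope classical_set_scope.
Local Open Scope ring_scope.

Section matrix_norm.
Context {R : realFieldType}.

Lemma mx_entry_norm_le {m n} (M : 'M[R]_(m, n)) i j : `|M i j| <= `|M|.
Proof.
rewrite [leRHS]/Num.Def.normr/= mx_normrE.
by apply: le_trans (le_bigmax _ _ (i, j)).
Qed.

Lemma mx_norm_le m n (M : 'M[R]_(m, n)) c :
  0 <= c -> (forall i j, `|M i j| <= c) -> `|M| <= c.
Proof.
by move=> c0 Mc; rewrite [leLHS]/Num.Def.normr/= mx_normrE; apply: bigmax_le.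
Qed.

Lemma norm_lsubmx_le m n1 n2 (M : 'M[R]_(m, n1 + n2)) : `|lsubmx M| <= `|M|.
Proof.
by apply: mx_norm_le => // i j; rewrite mxE; exact: mx_entry_norm_le.
Qed.

Lemma norm_rsubmx_le m n1 n2 (M : 'M[R]_(m, n1 + n2)) : `|rsubmx M| <= `|M|.
Proof.
by apply: mx_norm_le => // i j; rewrite mxE; exact: mx_entry_norm_le.
Qed.

Lemma norm_row_mx_le m n1 n2 (A : 'M[R]_(m, n1)) (B : 'M[R]_(m, n2)) c :
  `|A| <= c -> `|B| <= c -> `|row_mx A B| <= c.
Proof.
move=> Ac Bc; apply: mx_norm_le => [|i j]; first exact: le_trans Ac.
case: (split_ordP j) => j' ->; rewrite ?row_mxEl ?row_mxEr.
  exact: le_trans (mx_entry_norm_le _ _ _) Ac.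
exact: le_trans (mx_entry_norm_le _ _ _) Bc.
Qed.

Lemma cvg_mx_entrywise {T : Type} (F : set_system T) {FF : Filter F} m n
    (f : T -> 'M[R]_(m, n)) (l : 'M[R]_(m, n)) :
  (forall i j, (fun x => f x i j) @ F --> l i j) -> f @ F --> l.
Proof.
move=> fl; apply/cvgrPdist_le => e e0.
have : \forall x \near F, forall ij : 'I_m * 'I_n,
    `|l ij.1 ij.2 - f x ij.1 ij.2| <= e.
  by apply: filter_forall => -[i j]; exact: (cvgrPdist_le _ _).1 (fl i j) e e0.
apply: filterS => x lfx; apply: mx_norm_le => [|i j]; first exact: ltW.
by rewrite !mxE; exact: lfx (i, j).
Qed.

Lemma cvg_mx_entry {T : Type} (F : set_system T) {FF : Filter F} m n
    (f : T -> 'M[R]_(m, n)) (l : 'M[R]_(m, n)) i j :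
  f @ F --> l -> (fun x => f x i j) @ F --> l i j.
Proof.
move=> fl; apply: (@continuous_cvg _ _ _ _ _ f (fun M : 'M[R]_(m, n) => M i j)) => //.
exact: coord_continuous.
Qed.

Lemma cvg_row_mx {T : Type} (F : set_system T) {FF : Filter F} m n1 n2
    (f : T -> 'M[R]_(m, n1)) (g : T -> 'M[R]_(m, n2))
    (lf : 'M[R]_(m, n1)) (lg : 'M[R]_(m, n2)) :
  f @ F --> lf -> g @ F --> lg ->
  (fun x => row_mx (f x) (g x)) @ F --> row_mx lf lg.
Proof.
move=> flf glg; apply: cvg_mx_entrywise => i j.
case: (split_ordP j) => j' ->; rewrite ?row_mxEl ?row_mxEr.
  under eq_fun do rewrite row_mxEl; exact: cvg_mx_entry.
under eq_fun do rewrite row_mxEr; exact: cvg_mx_entry.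
Qed.

End matrix_norm.

Lemma continuous_of_lipschitz {R : realFieldType} {V W : normedModType R}
    {f : V -> W} {k : R} :
  (forall x y, `|f x - f y| <= k * `|x - y|) -> continuous f.
Proof.
move=> fk x; apply/cvgrPdist_lt => e e0.
have k1_gt0 : 0 < `|k| + 1 by rewrite ltr_pwDr.
near=> y.
apply: le_lt_trans (fk x y) _; apply: (@le_lt_trans _ _ ((`|k| + 1) * `|x - y|)).
  by rewrite ler_wpM2r// (le_trans (ler_norm k))// lerDl.
rewrite mulrC -ltr_pdivlMr//; near: y.
by apply: cvgr_dist_lt; [exact: cvg_id | rewrite divr_gt0].
Unshelve. all: by end_near.
Qed.

Section derive_matrix.
Context {R : realFieldType}.

Lemma derive1_linear_comp {V W : normedModType R} {f : {linear V -> W}}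
    {Y : R -> V} {t : R} :
  continuous f -> derivable Y t 1 ->
  derivable (f \o Y) t 1 /\ derive1 (f \o Y) t = f (derive1 Y t).
Proof.
move=> fc /derivable1_diffP dY.
have df : differentiable (f \o Y) t.
  by apply: differentiable_comp => //; exact: linear_differentiable.
split; first exact/derivable1_diffP.
rewrite !derive1E' // diff_comp //; last exact: linear_differentiable.
by rewrite /= diff_lin.
Qed.

Lemma derive1_row_mx {m n1 n2 : nat} {f : R -> 'M[R]_(m, n1)}
    {g : R -> 'M[R]_(m, n2)} {t : R} :
  derivable f t 1 -> derivable g t 1 ->
  derivable (fun s => row_mx (f s) (g s)) t 1 /\
  derive1 (fun s => row_mx (f s) (g s)) t = row_mx (derive1 f t) (derive1 g t).
Proof.
move=> df dg.
have fE i j : (fun s => row_mx (f s) (g s) i (lshift n2 j)) = (fun s => f s i j).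
  by apply/funext => s; rewrite row_mxEl.
have gE i j : (fun s => row_mx (f s) (g s) i (rshift n1 j)) = (fun s => g s i j).
  by apply/funext => s; rewrite row_mxEr.
have dfg : derivable (fun s => row_mx (f s) (g s)) t 1.
  apply/derivable_mxP => i j; case: (split_ordP j) => j' ->.
    by rewrite fE; exact: (derivable_mxP _ _ _).1 df i j'.
  by rewrite gE; exact: (derivable_mxP _ _ _).1 dg i j'.
split => //; rewrite !derive1E (derive_mx dfg) (derive_mx df) (derive_mx dg).
apply/matrixP => i j; rewrite mxE; case: (split_ordP j) => j' ->.
  by rewrite row_mxEl mxE fE.
by rewrite row_mxEr mxE gE.
Qed.

End derive_matrix.

Section exp_integral.
Context {R : realType}.
Notation mu := (@lebesgue_measure R).

Lemma continuous_expRM (K : R) : continuous (fun s : R => expR (K * s)).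
Proof.
move=> s; apply: (@continuous_comp _ _ _ ( *%R K) expR).
  exact: mulrl_continuous.
exact: continuous_expR.
Qed.

Lemma Rintegral_expRM (K t : R) : 0 < K -> 0 <= t ->
  \int[mu]_(s in `[0, t]) expR (K * s) = (expR (K * t) - 1) / K.
Proof.
move=> K0; rewrite le_eqVlt => /predU1P[<-|t0].
  by rewrite set_itv1 Rintegral_set1 mulr0 expR0 subrr mul0r.
have dE (s : R) : is_derive s (1 : R) (fun s => K^-1 * expR (K * s)) (expR (K * s)).
  have := is_deriveZ K^-1 (is_derive1_comp (is_derive_expR _)
    (is_deriveZ K (is_derive_id s (1 : R)))).
  by rewrite /GRing.scale /= mulr1 [_ * K]mulrC mulKf ?gt_eqF.
rewrite /Rintegral (@continuous_FTC2 _ (fun s => expR (K * s))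
  (fun s => K^-1 * expR (K * s)) 0 t t0).
- by rewrite -EFinB /= mulr0 expR0 -mulrBr mulrC.
- exact/continuous_subspaceT/continuous_expRM.
- split => [x _| |]; first by case: (dE x).
  + apply: cvg_at_right_filter; apply: cvgM; first exact: cvg_cst.
    exact: continuous_expRM.
  + apply: cvg_at_left_filter; apply: cvgM; first exact: cvg_cst.
    exact: continuous_expRM.
- by move=> x _; rewrite derive1E derive_val.
Qed.

End exp_integral.

Lemma geometric_lt_near {R : realType} (D q e : R) : `|q| < 1 -> 0 < e ->
  \forall N \near \oo, D * q ^+ N < e.
Proof. by move=> q1 e0; exact: cvgr_lt (cvg_geometric D q1) e e0. Qed.

Lemma le0_geometric {R : realType} (a D q : R) : `|q| < 1 ->
  (forall k, a <= D * q ^+ k) -> a <= 0.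
Proof.
move=> q1 aD; apply: cvgr_to_ge (cvg_geometric D q1) _.
by apply: nearW => k; exact: aD.
Qed.

Lemma within_continuous_uniform_limit {R : realType} {V : normedModType R}
    {K : set R} {f : nat -> R -> V} {g : R -> V} :
  (forall k, {within K, continuous f k}) ->
  (forall e, 0 < e -> exists N, forall t, K t -> `|g t - f N t| < e) ->
  {within K, continuous g}.
Proof.
move=> fc fg; apply/subspace_continuousP => s Ks; apply/cvgrPdist_lt => e e0.
have e3 : 0 < e / 3 by rewrite divr_gt0.
have [N gN] := fg _ e3.
have /subspace_continuousP /(_ s Ks) /cvgrPdist_lt /(_ _ e3) fN := fc N.
near=> t.
have Kt : K t by near: t; exact: within_nbhsW.
have fNst : `|f N s - f N t| < e / 3 by near: t.
have gs := gN s Ks; have gt := gN t Kt; rewrite distrC in gt.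
have -> : g s - g t = (g s - f N s) + (f N s - f N t) + (f N t - g t).
  by rewrite !addrA !subrK.
apply: le_lt_trans (ler_normD _ _) _.
apply: le_lt_trans (lerD (ler_normD _ _) (lexx _)) _; lra.
Unshelve. all: by end_near.
Qed.

Lemma integrable_within_continuous {R : realType} {h : R -> R} {a c : R} :
  {within `[a, c], continuous h} ->
  (@lebesgue_measure R).-integrable `[a, c] (EFin \o h).
Proof.
by move=> hc; apply: continuous_compact_integrable => //; exact: segment_compact.
Qed.

Section picard.
Context {R : realType} {n : nat}.
Notation mu := (@lebesgue_measure R).
Variables (F : R -> 'rV[R]_n -> 'rV[R]_n) (y0 : 'rV[R]_n).

Definition picard_map (x : R -> 'rV[R]_n) (t : R) : 'rV[R]_n :=
  y0 + \row_j \int[mu]_(s in `[0, t]) F s (x s) 0 j.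

Definition picard_iter (k : nat) : R -> 'rV[R]_n := iter k picard_map (cst y0).

(* Independent of the segment [[0, b]] on which convergence is proved below. *)
Definition picard_limit (t : R) : 'rV[R]_n := lim (picard_iter k t @[k --> \oo]).

Lemma picard_map0 x : picard_map x 0 = y0.
Proof. by apply/matrixP => i j; rewrite !mxE set_itv1 Rintegral_set1 addr0. Qed.

Let half_lt1 : `|2^-1 : R| < 1.
Proof. by rewrite ger0_norm ?invr_ge0// invf_lt1 ?ltr1n. Qed.

Section segment.
Variables (b L : R).
Hypotheses (b_ge0 : 0 <= b) (L_gt0 : 0 < L).
Hypothesis F_lipschitz :
  forall s y y', 0 <= s <= b -> `|F s y - F s y'| <= L * `|y - y'|.
Hypothesis F_continuous : forall x, {within `[0, b], continuous x} ->
  {within `[0, b], continuous (fun s => F s (x s))}.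

Lemma picard_integrand_continuous {x : R -> 'rV[R]_n} j {t : R} :
  0 <= t <= b -> {within `[0, b], continuous x} ->
  {within `[0, t], continuous (fun s => F s (x s) 0 j)}.
Proof.
move=> /andP[_ tb] /F_continuous Fx.
have tb' : `[0, t] `<=` `[0, b] by apply: subset_itvl; rewrite bnd_simp.
have /subspace_continuousP Fxt := continuous_subspaceW tb' Fx.
by apply/subspace_continuousP => s ts; apply: cvg_mx_entry; exact: Fxt.
Qed.

Lemma picard_map_continuous x : {within `[0, b], continuous x} ->
  {within `[0, b], continuous (picard_map x)}.
Proof.
move=> xc; apply/subspace_continuousP => s sb.
apply: cvgD; first exact: cvg_cst.
apply: cvg_mx_entrywise => i j; rewrite mxE.
under eq_fun do rewrite mxE.
have bb : 0 <= b <= b by rewrite lexx b_ge0.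
have Fxc := integrable_within_continuous (picard_integrand_continuous j bb xc).
have /subspace_continuousP := parameterized_integral_continuous b_ge0 Fxc.
by apply; rewrite /= in_itv.
Qed.

(* Bielecki's weight: integrating [L C e^(2Ls)] over [[0, t]] gives at most
   [C/2 e^(2Lt)], so the Picard map halves the weighted distance. *)
Lemma picard_map_contraction {x y : R -> 'rV[R]_n} {C t : R} :
  {within `[0, b], continuous x} -> {within `[0, b], continuous y} ->
  (forall s, 0 <= s <= b -> `|x s - y s| <= C * expR (2 * L * s)) ->
  0 <= t <= b ->
  `|picard_map x t - picard_map y t| <= C * 2^-1 * expR (2 * L * t).
Proof.
move=> xc yc xy tb; have /andP[t0 tb'] := tb.
have C0 : 0 <= C.
  have := xy 0; rewrite lexx b_ge0 mulr0 expR0 mulr1 => /(_ isT).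
  exact: le_trans.
apply: mx_norm_le => [|i j]; first by rewrite !mulr_ge0 ?invr_ge0 ?expR_ge0.
rewrite !mxE opprD addrACA subrr add0r.
have Fxc := picard_integrand_continuous j tb xc.
have Fyc := picard_integrand_continuous j tb yc.
rewrite -RintegralB ?integrable_within_continuous//.
have Fxyc := within_continuousB Fxc Fyc.
apply: le_trans (le_normr_Rintegral _ (integrable_within_continuous Fxyc)) _ => //.
have ce : continuous (fun s => L * C * expR (2 * L * s)).
  by move=> s; apply: cvgM; [exact: cvg_cst | exact: continuous_expRM].
apply: (@le_trans _ _ (\int[mu]_(s in `[0, t]) (L * C * expR (2 * L * s)))).
  apply: le_Rintegral => //.
  - apply/integrable_within_continuous/subspace_continuousP => s ts.
    by apply: cvg_norm; exact: (subspace_continuousP _ _).1 Fxyc s ts.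
  - exact/integrable_within_continuous/continuous_subspaceT.
  move=> s; rewrite /= in_itv /= => /andP[s0 st].
  have sb : 0 <= s <= b by rewrite s0 (le_trans st tb').
  have := mx_entry_norm_le (F s (x s) - F s (y s)) 0 j.
  rewrite !mxE => /le_trans; apply.
  apply: le_trans (F_lipschitz _ _ _ sb) _.
  by rewrite -mulrA ler_wpM2l ?(ltW L_gt0)// xy.
rewrite RintegralZl //; last first.
  exact/integrable_within_continuous/continuous_subspaceT/continuous_expRM.
rewrite Rintegral_expRM ?mulr_gt0//.
have -> : L * C * ((expR (2 * L * t) - 1) / (2 * L)) =
    C * 2^-1 * (expR (2 * L * t) - 1) by field; rewrite gt_eqF.
by rewrite ler_wpM2l ?mulr_ge0 ?invr_ge0// gerDl lerN10.
Qed.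

Lemma picard_map_derive {x : R -> 'rV[R]_n} {t : R} :
  0 < t < b -> {within `[0, b], continuous x} ->
  derivable (picard_map x) t 1 /\ derive1 (picard_map x) t = F t (x t).
Proof.
move=> /andP[t0 tb] xc.
have bb : 0 <= b <= b by rewrite lexx b_ge0.
have tI : t \in `]0, b[ by rewrite in_itv /= t0.
have Fxc j := picard_integrand_continuous j bb xc.
have FTC j := continuous_FTC1_closed tb (integrable_within_continuous (Fxc j)) t0
  (within_continuous_continuous (lt_trans t0 tb) (Fxc j) tI).
have mapE i j : (fun s => picard_map x s i j) =
    cst (y0 i j) + (fun s => \int[mu]_(u in `[0, s]) F u (x u) 0 j).
  by apply/funext => s; rewrite !mxE.
have dmap : derivable (picard_map x) t 1.
  apply/derivable_mxP => i j; rewrite mapE.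
  by apply: derivableD; [exact: derivable_cst | case: (FTC j)].
split => //; rewrite derive1E derive_mx//; apply/matrixP => i j.
rewrite !mxE mapE deriveD; first last.
- by case: (FTC j).
- exact: derivable_cst.
by rewrite derive_cst add0r -derive1E (FTC j).2 (ord1 i).
Qed.

Lemma solution_picard_fixpoint {Y : R -> 'rV[R]_n} :
  {within `[0, b], continuous Y} -> Y 0 = y0 ->
  (forall s, 0 < s < b -> derivable Y s 1 /\ derive1 Y s = F s (Y s)) ->
  forall t, 0 <= t <= b -> picard_map Y t = Y t.
Proof.
move=> Yc Y0 dY t /andP[]; rewrite le_eqVlt => /predU1P[<- _|t0 tb].
  by rewrite picard_map0.
have tb' : `[0, t] `<=` `[0, b] by apply: subset_itvl; rewrite bnd_simp.
have [_ Yt0 Ytt] := (continuous_within_itvP _ t0).1 (continuous_subspaceW tb' Yc).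
have dYI s : s \in `]0, t[ -> derivable Y s 1 /\ derive1 Y s = F s (Y s).
  by rewrite in_itv /= => /andP[s0 st]; apply: dY; rewrite s0 (lt_le_trans st tb).
apply/matrixP => i j; rewrite !mxE.
rewrite /Rintegral (@continuous_FTC2 _ _ (fun s => Y s i j) 0 t t0).
- by rewrite -EFinB /= Y0 addrC subrK.
- by apply: picard_integrand_continuous Yc; rewrite (ltW t0).
- split.
  + by move=> s /dYI[/derivable_mxP dYs _]; exact: dYs.
  + exact: cvg_mx_entry.
  + exact: cvg_mx_entry.
- move=> s /dYI[dYs eYs]; rewrite derive1E.
  have := congr1 (fun M : 'rV[R]_n => M i j) (derive_mx dYs).
  by rewrite /= mxE => <-; rewrite -derive1E eYs (ord1 i).
Qed.

Lemma exists_exp_weighted_bound {u v : R -> 'rV[R]_n} :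
  {within `[0, b], continuous u} -> {within `[0, b], continuous v} ->
  exists2 C, 0 <= C &
    forall s, 0 <= s <= b -> `|u s - v s| <= C * expR (2 * L * s).
Proof.
move=> uc vc.
have /subspace_continuousP uvc := within_continuousB uc vc.
have [c cb Mc] : exists2 c, c \in `[0, b] & forall s, s \in `[0, b] ->
    `|u s - v s| <= `|u c - v c|.
  apply: EVT_max b_ge0 _; apply/subspace_continuousP => s sb.
  by apply: cvg_norm; exact: uvc.
exists `|u c - v c| => // s sb.
apply: le_trans (Mc s _) _; first by rewrite in_itv.
rewrite ler_peMr// -expR0 ler_expR !mulr_ge0 ?(ltW L_gt0)//.
by case/andP: sb.
Qed.

Lemma picard_fixpoint_unique Y1 Y2 :
  {within `[0, b], continuous Y1} -> {within `[0, b], continuous Y2} ->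
  (forall t, 0 <= t <= b -> picard_map Y1 t = Y1 t) ->
  (forall t, 0 <= t <= b -> picard_map Y2 t = Y2 t) ->
  forall t, 0 <= t <= b -> Y1 t = Y2 t.
Proof.
move=> Y1c Y2c Y1fix Y2fix.
have [C _ YC] := exists_exp_weighted_bound Y1c Y2c.
have YCk k s : 0 <= s <= b -> `|Y1 s - Y2 s| <= C * 2^-1 ^+ k * expR (2 * L * s).
  elim: k s => [|k IH] s sb; first by rewrite expr0 mulr1; exact: YC.
  rewrite -(Y1fix s sb) -(Y2fix s sb) exprSr mulrA.
  exact: picard_map_contraction.
move=> t tb; apply/eqP; rewrite -subr_eq0 -normr_le0.
apply: (le0_geometric _ (C * expR (2 * L * t)) _ half_lt1) => k.
by rewrite mulrAC; exact: YCk.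
Qed.

Lemma picard_iter_continuous k : {within `[0, b], continuous picard_iter k}.
Proof.
elim: k => [|k IH]; first exact/continuous_subspaceT/cst_continuous.
exact: picard_map_continuous.
Qed.

Section picard_convergence.
Variable C : R.
Hypothesis C_ge0 : 0 <= C.
Hypothesis picard_iter1_bound : forall s, 0 <= s <= b ->
  `|picard_iter 1 s - picard_iter 0 s| <= C * expR (2 * L * s).

Lemma picard_iter_dist0 k s : 0 <= s <= b ->
  `|picard_iter k s - picard_iter 0 s| <= 2 * C * expR (2 * L * s).
Proof.
elim: k s => [|k IH] s sb; first by rewrite subrr normr0 !mulr_ge0 ?expR_ge0.
have -> : picard_iter k.+1 s - picard_iter 0 s =
    (picard_map (picard_iter k) s - picard_iter 1 s) +
    (picard_iter 1 s - picard_iter 0 s).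
  by rewrite addrA subrK.
apply: le_trans (ler_normD _ _) _.
have := picard_map_contraction (picard_iter_continuous k)
  (picard_iter_continuous 0) IH sb.
by move=> /lerD /(_ (picard_iter1_bound s sb)) /le_trans; apply; lra.
Qed.

Lemma picard_iter_cauchy k m s : 0 <= s <= b ->
  `|picard_iter (k + m) s - picard_iter k s| <=
    2 * C * 2^-1 ^+ k * expR (2 * L * s).
Proof.
elim: k s => [|k IH] s sb.
  by rewrite add0n expr0 mulr1; exact: picard_iter_dist0.
rewrite addSn exprSr mulrA.
exact: picard_map_contraction (picard_iter_continuous _)
  (picard_iter_continuous _) IH sb.
Qed.

Lemma picard_error_small {e : R} : 0 < e -> exists N,
  forall s, 0 <= s <= b -> 2 * C * 2^-1 ^+ N * expR (2 * L * s) < e.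
Proof.
move=> e0.
have [N _ NE] := geometric_lt_near (2 * C * expR (2 * L * b)) _ _ half_lt1 e0.
exists N => s /andP[s0 sb]; apply: le_lt_trans (NE N (leqnn N)).
rewrite mulrAC ler_wpM2r ?exprn_ge0 ?invr_ge0// ler_wpM2l ?mulr_ge0// ler_expR.
by rewrite ler_wpM2l ?mulr_ge0 ?(ltW L_gt0).
Qed.

Lemma picard_iter_cvg s : 0 <= s <= b -> cvgn (fun k => picard_iter k s).
Proof.
move=> sb; apply/cauchy_cvgP/cauchy_exP => e e0.
have [N NE] := picard_error_small e0.
exists (picard_iter N s); exists N => // k /= Nk.
rewrite -ball_normE /ball_ /= distrC -(subnKC Nk).
exact: le_lt_trans (picard_iter_cauchy _ _ _ sb) (NE s sb).
Qed.

Lemma picard_limit_dist k s : 0 <= s <= b ->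
  `|picard_limit s - picard_iter k s| <= 2 * C * 2^-1 ^+ k * expR (2 * L * s).
Proof.
move=> sb.
apply: (@cvgr_to_le _ \oo _ _ (fun m => `|picard_iter m s - picard_iter k s|)).
  by apply: cvg_norm; apply: cvgB; [exact: picard_iter_cvg | exact: cvg_cst].
by exists k => // m /= km; rewrite -(subnKC km); exact: picard_iter_cauchy.
Qed.

Lemma picard_limit_continuous : {within `[0, b], continuous picard_limit}.
Proof.
apply: (within_continuous_uniform_limit picard_iter_continuous) => e e0.
have [N NE] := picard_error_small e0.
exists N => s; rewrite /= in_itv /= => sb.
exact: le_lt_trans (picard_limit_dist N s sb) (NE s sb).
Qed.

Lemma picard_limit_fixpoint t :
  0 <= t <= b -> picard_map picard_limit t = picard_limit t.
Proof.
move=> tb; apply/eqP; rewrite -subr_eq0 -normr_le0.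
apply: (le0_geometric _ (2 * C * expR (2 * L * t)) _ half_lt1) => k.
have -> : picard_map picard_limit t - picard_limit t =
    (picard_map picard_limit t - picard_iter k.+1 t) +
    (picard_iter k.+1 t - picard_limit t).
  by rewrite addrA subrK.
apply: le_trans (ler_normD _ _) _; rewrite [`|picard_iter _ _ - _|]distrC.
have := picard_map_contraction picard_limit_continuous (picard_iter_continuous k)
  (picard_limit_dist k) tb.
move=> /lerD /(_ (picard_limit_dist k.+1 t tb)) /le_trans; apply.
rewrite exprSr; lra.
Qed.

End picard_convergence.

Lemma picard_limit_continuous_fixpoint :
  {within `[0, b], continuous picard_limit} /\
  forall t, 0 <= t <= b -> picard_map picard_limit t = picard_limit t.
Proof.
have [C C_ge0 C1] := exists_exp_weighted_bound (picard_iter_continuous 1)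
  (picard_iter_continuous 0).
by split; [exact: picard_limit_continuous C1 | exact: picard_limit_fixpoint C1].
Qed.

Lemma picard_limit_solves :
  [/\ {within `[0, b], continuous picard_limit}, picard_limit 0 = y0 &
      forall t, 0 < t < b ->
        derivable picard_limit t 1 /\
        derive1 picard_limit t = F t (picard_limit t)].
Proof.
have [limc limfix] := picard_limit_continuous_fixpoint.
split=> //; first by rewrite -limfix ?picard_map0 ?lexx ?b_ge0.
move=> t tb.
have near_fix : \forall s \near t, picard_map picard_limit s = picard_limit s.
  have : t \in `]0, b[ by rewrite in_itv.
  move=> /near_in_itvoo; apply: filterS => s; rewrite in_itv /= => /andP[s0 sb].
  by apply: limfix; rewrite !ltW.
have [dmap emap] := picard_map_derive tb limc.
split; first exact: near_eq_derivable near_fix dmap.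
by rewrite derive1E -(near_eq_derive _ near_fix) -derive1E.
Qed.

Lemma picard_limit_unique Y : {within `[0, b], continuous Y} -> Y 0 = y0 ->
  (forall s, 0 < s < b -> derivable Y s 1 /\ derive1 Y s = F s (Y s)) ->
  forall t, 0 <= t <= b -> Y t = picard_limit t.
Proof.
move=> Yc Y0 dY; have [limc limfix] := picard_limit_continuous_fixpoint.
by apply: picard_fixpoint_unique Yc limc
  (solution_picard_fixpoint Yc Y0 dY) limfix.
Qed.

End segment.
End picard.

Arguments picard_limit_solves {R n F y0 b L}.
Arguments picard_limit_unique {R n F y0 b L}.

Lemma within_continuous_itvco {R : realType} {V : normedModType R}
    (f : R -> V) (a c : R) :
  (forall b, a <= b < c -> {within `[a, b], continuous f}) ->
  {within `[a, c[, continuous f}.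
Proof.
move=> fc; apply/subspace_continuousP => t /andP[]; rewrite !bnd_simp => at0 tc.
have [tb bc] := midf_lt tc; set b := (t + c) / 2 in tb bc.
have bI : a <= b < c by rewrite (le_trans at0 (ltW tb)) bc.
have /subspace_continuousP /(_ t) := fc b bI.
rewrite /= in_itv /= at0 (ltW tb) => /(_ isT) ft.
apply: cvg_trans ft; apply: cvg_fmap2 => P; rewrite /within /= => Pt.
apply: filterS2 Pt (lt_nbhsl tb) => s Ps sb.
rewrite /= in_itv /= => /andP[a_s _].
by apply: Ps; rewrite /= in_itv /= a_s (ltW sb).
Qed.

Lemma C1_on_0T_linear_comp {R : realType} {V W : normedModType R}
    (f : {linear V -> W}) (T : R) (Y : R -> V) :
  0 < T -> continuous f -> C1_on_0T T Y -> C1_on_0T T (f \o Y).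
Proof.
move=> T0 fc [Yc dY dYc /cvg_ex[l dYl]].
have dfY t : 0 < t < T -> derive1 (f \o Y) t = f (derive1 Y t).
  by move=> /dY /(derive1_linear_comp fc) [].
split.
- apply/subspace_continuousP => t tI; apply: continuous_cvg; first exact: fc.
  exact: (subspace_continuousP _ _).1 Yc t tI.
- by move=> t /dY /(derive1_linear_comp fc) [].
- move=> t tI; have : \forall s \near t, f (derive1 Y s) = derive1 (f \o Y) s.
    move: tI => /near_in_itvoo; apply: filterS => s sI.
    by rewrite dfY// -in_itv.
  move=> nfY; rewrite /continuous_at -(nbhs_singleton nfY).
  apply: cvg_trans (near_eq_cvg nfY) _; apply: continuous_cvg; first exact: fc.
  exact: dYc.
- apply/cvg_ex; exists (f l).
  have nfY : \forall s \near 0^'+, f (derive1 Y s) = derive1 (f \o Y) s.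
    near=> s; rewrite dfY//; apply/andP; split.
      by near: s; exact: nbhs_right_gt.
    by near: s; exact: nbhs_right_lt.
  apply: cvg_trans (near_eq_cvg nfY) _; apply: continuous_cvg; first exact: fc.
  exact: dYl.
Unshelve. all: by end_near.
Qed.

Section system.
Context {R : realType} {d : nat}.
Variables (A : 'rV[R]_d -> 'rV[R]_d) (T : R) (X0 : 'rV[R]_d) (k : R).
Hypothesis A_lipschitz : forall x y, `|A x - A y| <= k * `|x - y|.
Hypothesis T_gt0 : 0 < T.

Definition system_field (s : R) (y : 'rV[R]_(d + d)) : 'rV[R]_(d + d) :=
  row_mx (- rsubmx y - A (lsubmx y))
         (- ((T - s)^-1 *: rsubmx y) - (T - s)^-1 *: A (lsubmx y)).

Definition system_solution : R -> 'rV[R]_(d + d) :=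
  picard_limit system_field (row_mx X0 0).

Lemma system_field_cvg {U : Type} (G : set_system U) {FG : Filter G}
    (u : U -> R) (y : U -> 'rV[R]_(d + d)) t yt :
  t < T -> u @ G --> t -> y @ G --> yt ->
  (fun p => system_field (u p) (y p)) @ G --> system_field t yt.
Proof.
move=> tT ut yyt.
have Ac := continuous_of_lipschitz A_lipschitz.
have zc : (fun p => rsubmx (y p)) @ G --> rsubmx yt.
  exact: continuous_cvg (@continuous_rsubmx _ _ _ _ _) yyt.
have Axc : (fun p => A (lsubmx (y p))) @ G --> A (lsubmx yt).
  apply: continuous_cvg (Ac _) _.
  exact: continuous_cvg (@continuous_lsubmx _ _ _ _ _) yyt.
have wc : (fun p => (T - u p)^-1) @ G --> (T - t)^-1.
  by apply: cvgV; [rewrite subr_eq0 gt_eqF | apply: cvgB; [exact: cvg_cst |]].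
apply: cvg_row_mx; apply: cvgB.
- exact: cvgN zc.
- exact: Axc.
- exact: cvgN (cvgZ wc zc).
- exact: cvgZ wc Axc.
Qed.

Lemma system_field_within_continuous {b : R} {x : R -> 'rV[R]_(d + d)} :
  b < T -> {within `[0, b], continuous x} ->
  {within `[0, b], continuous (fun s => system_field s (x s))}.
Proof.
move=> bT /subspace_continuousP xc; apply/subspace_continuousP => t tb.
apply: system_field_cvg (xc t tb).
  by move: tb; rewrite /= in_itv /= => /andP[_ /le_lt_trans]; apply.
by apply: cvg_within_filter; exact: cvg_id.
Qed.

Lemma system_field_lipschitz {b : R} : b < T -> exists2 L, 0 < L &
  forall s y y', 0 <= s <= b ->
    `|system_field s y - system_field s y'| <= L * `|y - y'|.
Proof.
move=> bT; exists ((1 + (T - b)^-1) * (1 + `|k|)).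
  by rewrite mulr_gt0// ltr_pwDl// invr_ge0 subr_ge0 ltW.
move=> s y y' /andP[s0 sb].
have w0 : 0 <= (T - s)^-1 by rewrite invr_ge0 subr_ge0 ltW// (le_lt_trans sb bT).
have wb : (T - s)^-1 <= (T - b)^-1.
  by rewrite lef_pV2 ?posrE ?subr_gt0 ?(le_lt_trans sb bT)// lerD2l lerN2.
set D := rsubmx y - rsubmx y' + (A (lsubmx y) - A (lsubmx y')).
have DE : `|D| <= (1 + `|k|) * `|y - y'|.
  rewrite mulrDl mul1r; apply: le_trans (ler_normD _ _) (lerD _ _).
    by rewrite -linearB; exact: norm_rsubmx_le.
  apply: le_trans (A_lipschitz _ _) _; rewrite -linearB.
  apply: le_trans (ler_wpM2r (normr_ge0 _) (ler_norm k)) _.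
  by rewrite ler_wpM2l//; exact: norm_lsubmx_le.
rewrite -mulrA /system_field opp_row_mx add_row_mx; apply: norm_row_mx_le.
  have -> : - rsubmx y - A (lsubmx y) - (- rsubmx y' - A (lsubmx y')) = - D.
    by apply/matrixP => i j; rewrite !mxE; ring.
  rewrite normrN; apply: le_trans DE (ler_peMl _ _) => //.
  by rewrite lerDl invr_ge0 subr_ge0 ltW.
have -> : - ((T - s)^-1 *: rsubmx y) - (T - s)^-1 *: A (lsubmx y) -
    (- ((T - s)^-1 *: rsubmx y') - (T - s)^-1 *: A (lsubmx y')) =
    - ((T - s)^-1 *: D).
  by apply/matrixP => i j; rewrite !mxE; ring.
rewrite normrN normrZ ger0_norm//; apply: ler_pM => //.
by apply: le_trans wb _; rewrite lerDr.
Qed.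

Lemma system_solution_solves {b : R} : 0 <= b -> b < T ->
  [/\ {within `[0, b], continuous system_solution},
      system_solution 0 = row_mx X0 0 &
      forall t, 0 < t < b -> derivable system_solution t 1 /\
        derive1 system_solution t = system_field t (system_solution t)].
Proof.
move=> b0 bT; have [L L0 FL] := system_field_lipschitz bT.
exact: picard_limit_solves b0 L0 FL (fun _ => system_field_within_continuous bT).
Qed.

Lemma system_solution0 : system_solution 0 = row_mx X0 0.
Proof. by have [] := system_solution_solves (lexx 0) T_gt0. Qed.

Lemma system_solution_ode {t : R} : 0 < t < T ->
  derivable system_solution t 1 /\
  derive1 system_solution t = system_field t (system_solution t).
Proof.
move=> /andP[t0 tT]; have [tb bT] := midf_lt tT.
have [_ _] := system_solution_solves (ltW (lt_trans t0 tb)) bT; apply.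
by rewrite t0 tb.
Qed.

Lemma system_solution_C1 : C1_on_0T T system_solution.
Proof.
have ode_eq s : 0 < s < T ->
    system_field s (system_solution s) = derive1 system_solution s.
  by move=> /system_solution_ode[].
split.
- apply: within_continuous_itvco => b /andP[b0 bT].
  by have [] := system_solution_solves b0 bT.
- by move=> t /system_solution_ode[].
- move=> t tI; have tT : 0 < t < T by move: tI; rewrite in_itv.
  have nfY : \forall s \near t,
      system_field s (system_solution s) = derive1 system_solution s.
    by move: tI => /near_in_itvoo; apply: filterS => s; rewrite in_itv => /ode_eq.
  rewrite /continuous_at -(nbhs_singleton nfY); apply: cvg_trans (near_eq_cvg nfY) _.
  apply: system_field_cvg (andP tT).2 cvg_id _.
  apply/differentiable_continuous/derivable1_diffP.
  by case: (system_solution_ode tT).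
- apply/cvg_ex; exists (system_field 0 (system_solution 0)).
  have nfY : \forall s \near 0^'+,
      system_field s (system_solution s) = derive1 system_solution s.
    near=> s; apply: ode_eq; apply/andP; split; near: s.
      exact: nbhs_right_gt.
    exact: nbhs_right_lt.
  apply: cvg_trans (near_eq_cvg nfY) _.
  apply: system_field_cvg T_gt0 (cvg_at_right_filter cvg_id) _.
  have [T2_gt0 T2_lt] := midf_lt T_gt0; rewrite add0r in T2_gt0 T2_lt.
  have [Yc _ _] := system_solution_solves (ltW T2_gt0) T2_lt.
  by have [_ + _] := (continuous_within_itvP _ T2_gt0).1 Yc.
Unshelve. all: by end_near.
Qed.

Lemma system_solution_unique Y :
  {within `[0, T[, continuous Y} -> Y 0 = row_mx X0 0 ->
  (forall s, 0 < s < T -> derivable Y s 1 /\ derive1 Y s = system_field s (Y s)) ->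
  forall t, 0 <= t < T -> Y t = system_solution t.
Proof.
move=> Yc Y0 dY t /andP[t0 tT]; have [L L0 FL] := system_field_lipschitz tT.
have Fc x := @system_field_within_continuous t x tT.
apply: (picard_limit_unique t0 L0 FL Fc) => //.
- by apply: continuous_subspaceW Yc; apply: subset_itvl; rewrite bnd_simp.
- by move=> s /andP[s0 st]; apply: dY; rewrite s0 (lt_trans st tT).
- by rewrite t0 lexx.
Qed.

Lemma solves_system_solution :
  solves_system A T X0 (lsubmx \o system_solution) (rsubmx \o system_solution).
Proof.
split.
- apply: C1_on_0T_linear_comp T_gt0 _ system_solution_C1.
  exact: continuous_lsubmx.
- apply: C1_on_0T_linear_comp T_gt0 _ system_solution_C1.
  exact: continuous_rsubmx.
- by rewrite /= system_solution0 row_mxKl.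
- by rewrite /= system_solution0 row_mxKr.
move=> t /system_solution_ode [dY eY].
rewrite (derive1_linear_comp (@continuous_lsubmx _ _ _ _) dY).2.
rewrite (derive1_linear_comp (@continuous_rsubmx _ _ _ _) dY).2.
by rewrite eY /= /system_field row_mxKl row_mxKr.
Qed.

Lemma solves_system_unique {X Z : R -> 'rV[R]_d} : solves_system A T X0 X Z ->
  forall t, 0 <= t < T -> row_mx (X t) (Z t) = system_solution t.
Proof.
move=> [[Xc dX _ _] [Zc dZ _ _] X0E Z0E ode].
apply: system_solution_unique.
- apply/subspace_continuousP => s sI; apply: cvg_row_mx.
    exact: (subspace_continuousP _ _).1 Xc s sI.
  exact: (subspace_continuousP _ _).1 Zc s sI.
- by rewrite X0E Z0E.
move=> s sT; have [eX eZ] := ode s sT.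
have [dXZ ->] := derive1_row_mx (dX s sT) (dZ s sT).
by rewrite eX eZ /system_field row_mxKl row_mxKr.
Qed.

End system.

Arguments solves_system_solution {R d A T X0 k}.
Arguments solves_system_unique {R d A T X0 k} _ {X Z}.

Theorem theoremH1 (R : realType) (d : nat) (A : 'rV[R]_d -> 'rV[R]_d)
    (T : R) (X0 : 'rV[R]_d) :
  lipschitz_map A -> 0 < T ->
  exists X Z : R -> 'rV[R]_d,
    solves_system A T X0 X Z /\
    forall X' Z' : R -> 'rV[R]_d, solves_system A T X0 X' Z' ->
      forall t, 0 <= t < T -> X' t = X t /\ Z' t = Z t.
Proof.
move=> [k A_lipschitz] T_gt0.
exists (lsubmx \o system_solution A T X0), (rsubmx \o system_solution A T X0).
split; first exact: solves_system_solution A_lipschitz T_gt0.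
move=> X Z XZ t tT; have XZE := solves_system_unique A_lipschitz XZ t tT.
by rewrite /= -XZE row_mxKl row_mxKr.
Qed.
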